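(* Let $1\le b<\frac{n}{2}-1$ and let $T$ be a tree attaining the maximum value of $M_2$ over $\mathcal{CT}^*_{n,b}$. Then every vertex of degree $3$ in $T$ (if any) has at most one neighbor of degree $4$.
   Context: A chemical tree is a tree with maximum degree at most $4$. A branching vertex is a vertex of degree greater than $2$. $\mathcal{CT}^*_{n,b}$ is the class of all $n$-vertex chemical trees with exactly $b$ branching vertices. $M_2(G)=\sum_{uv\in E(G)}d_ud_v$, where $d_v$ is the degree of $v$. *)

From mathcomp Require Import all_boot.
Set Implicit Arguments. Unset Strict Implicit. Unset Printing Implicit Defensive.

Definition simple_graph (n : nat) (e : rel 'I_n) : Prop :=
  symmetric e /\ irreflexive e.

Definition deg (n : nat) (e : rel 'I_n) (v : 'I_n) : nat := #|[set u | e v u]|.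

(* edge set: unordered pairs {u,v}, represented by (u,v) with u < v *)
Definition edges (n : nat) (e : rel 'I_n) : {set 'I_n * 'I_n} :=
  [set p | e p.1 p.2 && (p.1 < p.2)%N].

Definition is_tree (n : nat) (e : rel 'I_n) : Prop :=
  simple_graph e /\ (forall u v, connect e u v) /\ #|edges e| = n.-1.

Definition chemical_tree (n : nat) (e : rel 'I_n) : Prop :=
  is_tree e /\ forall v, deg e v <= 4.

Definition nbranching (n : nat) (e : rel 'I_n) : nat :=
  #|[set v | 2 < deg e v]|.

Definition in_CT (n b : nat) (e : rel 'I_n) : Prop :=
  chemical_tree e /\ nbranching e = b.

Definition M2 (n : nat) (e : rel 'I_n) : nat :=
  \sum_(p in edges e) deg e p.1 * deg e p.2.

From mathcomp Require Import all_boot fingroup perm zify.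
Set Implicit Arguments. Unset Strict Implicit. Unset Printing Implicit Defensive.

(* Root T at v and suppose v has two neighbours u1, u2 of degree 4.  Walking
   down from u2 one meets a first vertex f of degree at most 3, whose parent y
   has degree 4.  Replacing the edges v u1 and y f by v f and y u1 gives again a
   chemical tree with the same degree sequence, hence in CT*_{n,b}, and changes
   M2 by 3 d_f + 4 * 4 - 3 * 4 - 4 d_f = 4 - d_f > 0, contradicting maximality. *)

Lemma connect_descent (T : finType) (e : rel T) (r : T) (p : T -> T) (m : T -> nat) :
  (forall x, x != r -> e x (p x) && (m (p x) < m x)) -> forall x, connect e x r.
Proof.
move=> step x; have [k] := ubnP (m x); elim: k x => // k ih x lt_x.
have [-> // | xr] := eqVneq x r; have /andP [exp lt_p] := step x xr.
by apply: connect_trans (connect1 exp) (ih _ _); lia.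
Qed.

Lemma rooted_parent_exists (T : finType) (e : rel T) (r : T) :
  (forall x, connect e x r) ->
  exists par : T -> T, exists d : T -> nat,
    [/\ par r = r, d r = 0 & forall x, x != r -> e x (par x) && (d (par x) < d x)].
Proof.
move=> conn.
pose reach x k := [exists p : k.-tuple T, path e x p && (last x p == r)].
have reach_ex x : exists k, reach x k.
  have /connectP [p pth lst] := conn x.
  by exists (size p); apply/existsP; exists (in_tuple p); rewrite /= pth -lst eqxx.
pose d x := ex_minn (reach_ex x).
have d_reach x : reach x (d x) by rewrite /d; case: ex_minnP.
have d_min x k : reach x k -> d x <= k by rewrite /d; case: ex_minnP => m _; apply.
have step x : x != r -> exists z, e x z && (d z < d x).
  move=> xr; have /existsP [[[|z p] sz] /andP [/= pth lst]] := d_reach x.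
    by rewrite (eqP lst) eqxx in xr.
  case/andP: pth => exz pth; exists z; rewrite exz -(eqP sz) ltnS.
  by apply: d_min; apply/existsP; exists (in_tuple p); rewrite /= pth.
exists (fun x => if x == r then r else odflt r [pick z | e x z && (d z < d x)]), d.
split=> [|| x xr]; first by rewrite eqxx.
  by apply/eqP; rewrite -leqn0; apply: d_min; apply/existsP; exists [tuple]; rewrite /= eqxx.
rewrite (negbTE xr); case: pickP => [z // | none].
by have [z] := step x xr; rewrite none.
Qed.

Lemma fconnect_comparable (T : finType) (f : T -> T) (x a a' : T) :
  fconnect f x a -> fconnect f x a' -> fconnect f a a' || fconnect f a' a.
Proof.
move=> /iter_findex <- /iter_findex <-.
have [le | /ltnW le] := leqP (findex f x a) (findex f x a'); apply/orP; [left | right];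
  by rewrite -(subnK le) iterD fconnect_iter.
Qed.

Definition edge_of n (x y : 'I_n) : 'I_n * 'I_n := if x < y then (x, y) else (y, x).

Lemma edge_ofC n (x y : 'I_n) : edge_of x y = edge_of y x.
Proof. by rewrite /edge_of; case: ltngtP => // /val_inj ->. Qed.

Lemma edge_of_inj n (x y x' y' : 'I_n) :
  edge_of x y = edge_of x' y' -> (x = x' /\ y = y') \/ (x = y' /\ y = x').
Proof. by rewrite /edge_of; do 2!case: ifP => _; case=> -> ->; [left|right|right|left]. Qed.

Lemma edge_of_idem n (x z : 'I_n) : edge_of (edge_of x z).1 (edge_of x z).2 = edge_of x z.
Proof. by rewrite {2 3}/edge_of; case: ifP => // _; apply: edge_ofC. Qed.

Lemma edge_of_edges n (e : rel 'I_n) (x y : 'I_n) :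
  symmetric e -> e x y -> x != y -> edge_of x y \in edges e.
Proof.
move=> sym_e exy /eqP xy; rewrite inE /edge_of.
case: ltngtP => [lt | lt | /val_inj //] /=; first by rewrite exy.
by rewrite sym_e exy.
Qed.

Lemma card_edges_connected n (e : rel 'I_n) (r : 'I_n) :
  symmetric e -> (forall x, connect e x r) -> n.-1 <= #|edges e|.
Proof.
move=> sym_e conn; have [par [d [_ _ step]]] := rooted_parent_exists conn.
rewrite -{1}(card_ord n) -(cardsC1 r) -(card_in_imset (f := fun x => edge_of x (par x))).
  apply/subset_leq_card/subsetP => p /imsetP [x]; rewrite in_setC1 => xr ->.
  have /andP [exp lt] := step x xr.
  by apply: edge_of_edges sym_e exp _; apply: contraTneq lt => <-; rewrite ltnn.
move=> x x'; rewrite !in_setC1 => xr x'r /edge_of_inj [[-> _] // | [xp px]].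
by have := step x xr; have := step x' x'r; rewrite -xp -px => /andP [_ ?] /andP [_ ?]; lia.
Qed.

Lemma sum_nbr_edges n (e : rel 'I_n) (w : 'I_n -> 'I_n -> nat) :
  symmetric e -> irreflexive e -> (forall x y, w x y = w y x) ->
  \sum_x \sum_(z | e x z) w x z = 2 * \sum_(p in edges e) w p.1 p.2.
Proof.
move=> sym_e irr_e sym_w.
rewrite pair_big_dep /= (bigID (fun p : 'I_n * 'I_n => p.1 < p.2)) /= mul2n -addnn.
congr (_ + _); first by apply: eq_bigl => p; rewrite inE.
rewrite (reindex_inj (h := fun p : 'I_n * 'I_n => (p.2, p.1))) /=; last first.
  by move=> [? ?] [? ?] [-> ->].
apply: eq_big => [[x z] | p _] /=; last exact: sym_w.
rewrite inE sym_e /=; case exz: (e x z) => //=.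
have : x != z by apply: contraTneq exz => ->; rewrite irr_e.
by rewrite -val_eqE /=; lia.
Qed.

Lemma handshake n (e : rel 'I_n) :
  symmetric e -> irreflexive e -> \sum_x deg e x = 2 * #|edges e|.
Proof.
move=> sym_e irr_e; rewrite -sum1_card -(@sum_nbr_edges _ e (fun _ _ => 1)) //.
by apply: eq_bigr => x _; rewrite /deg -sum1_card; apply: eq_bigl => z; rewrite inE.
Qed.

Lemma M2_nbr_sum n (e : rel 'I_n) :
  symmetric e -> irreflexive e ->
  2 * M2 e = \sum_x \sum_(z | e x z) deg e x * deg e z.
Proof. by move=> sym_e irr_e; rewrite sum_nbr_edges // => x y; rewrite mulnC. Qed.

Section Switch.
Variables (n : nat) (e : rel 'I_n) (a b c f : 'I_n).

(* [switch e a b c f] trades the edges ab, cf for af, cb: each of a, b, c, f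
   relabels its neighbourhood by a transposition, so all degrees are kept. *)
Definition switch_map (x z : 'I_n) : 'I_n :=
  if x == a then tperm b f z else if x == b then tperm a c z
  else if x == c then tperm f b z else if x == f then tperm c a z else z.

Definition switch : rel 'I_n := fun x z => e x (switch_map x z).

Definition switchable : bool :=
  [&& uniq [:: a; b; c; f], e a b, e c f, ~~ e a f & ~~ e c b].

Lemma switch_mapK x : involutive (switch_map x).
Proof. by move=> z; rewrite /switch_map; do 4?[case: eqVneq => _; rewrite ?tpermK //]. Qed.

Lemma switch_map_id x : x \notin [:: a; b; c; f] -> switch_map x =1 id.
Proof.
by rewrite !inE /switch_map => /norP[/negbTE-> /norP[/negbTE-> /norP[/negbTE-> /negbTE->]]].
Qed.

Lemma switch_mapE : uniq [:: a; b; c; f] ->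
  [/\ switch_map a =1 tperm b f, switch_map b =1 tperm a c,
      switch_map c =1 tperm f b & switch_map f =1 tperm c a].
Proof.
rewrite /= !inE !negb_or => /and4P[/and3P[ab ac af] /andP[bc bf] cf _].
by split=> z; rewrite /switch_map eqxx // ?[b == _]eq_sym ?[c == _]eq_sym ?[f == _]eq_sym
  ?(negbTE ab) ?(negbTE ac) ?(negbTE bc) ?(negbTE af) ?(negbTE bf) ?(negbTE cf).
Qed.

Lemma deg_switch x : deg switch x = deg e x.
Proof.
rewrite /deg -(card_preimset _ (can_inj (switch_mapK x))).
by apply: eq_card => z; rewrite !inE /switch switch_mapK.
Qed.

Lemma sum_switch x (g : 'I_n -> nat) :
  \sum_(z | switch x z) g z = \sum_(z | e x z) g (switch_map x z).
Proof.
rewrite (reindex_inj (can_inj (switch_mapK x))) /=.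
by apply: eq_bigl => z; rewrite /switch switch_mapK.
Qed.

Lemma switch_sym : symmetric e -> switchable -> symmetric switch.
Proof.
move=> sym_e /and5P[/= abcf eab ecf /negbTE naf /negbTE ncb] x z.
move: abcf; rewrite !inE !negb_or => /and4P[/and3P[ab ac af] /andP[bc bf] cf _].
have := sym_e x z; have := sym_e a b; have := sym_e c f; have := sym_e a f; have := sym_e c b.
rewrite /switch /switch_map /tperm !permE /=.
do ![rewrite ?eqxx /=; case: eqP => [?|?]; subst].
all: try by move: ab ac af bc bf cf; rewrite ?eqxx.
all: rewrite /is_true in eab ecf; congruence.
Qed.

Lemma switch_irr : irreflexive e -> switchable -> irreflexive switch.
Proof.
move=> irr_e /and5P[/= abcf _ _ _ _] x.
move: abcf; rewrite !inE !negb_or /switch /switch_map /tperm !permE /=.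
do ![rewrite ?eqxx /=; case: eqP => [?|?]; subst]; by rewrite ?irr_e ?andbF.
Qed.

Lemma sum_tperm x p q (g : 'I_n -> nat) : e x p -> ~~ e x q ->
  \sum_(z | e x z) g (tperm p q z) + g p = \sum_(z | e x z) g z + g q.
Proof.
move=> exp nexq; rewrite !(bigD1 p exp) /= tpermL.
rewrite (eq_bigr g) => [|z /andP[exz zp]]; first lia.
by rewrite tpermD // eq_sym //; apply: contraNneq nexq => <-.
Qed.

Lemma M2_switch : symmetric e -> irreflexive e -> switchable ->
  M2 switch + deg e a * deg e b + deg e c * deg e f =
  M2 e + deg e a * deg e f + deg e c * deg e b.
Proof.
move=> sym_e irr_e sw; have sym_s := switch_sym sym_e sw; have irr_s := switch_irr irr_e sw.
case/and5P: (sw) => abcf eab ecf naf ncb.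
have [Ea Eb Ec Ef] := switch_mapE abcf.
apply/eqP; rewrite -(eqn_pmul2l (isT : 0 < 2)) !mulnDr.
rewrite (M2_nbr_sum sym_s irr_s) (M2_nbr_sum sym_e irr_e); apply/eqP.
set D := deg e.
pose F x := \sum_(z | e x z) D x * D (switch_map x z).
pose G x := \sum_(z | e x z) D x * D z.
have -> : \sum_x \sum_(z | switch x z) deg switch x * deg switch z = \sum_x F x.
  by apply: eq_bigr => x _; rewrite sum_switch; apply: eq_bigr => z _; rewrite !deg_switch.
rewrite -/(\sum_x G x) [\sum_x F x](bigID (mem [:: a; b; c; f])).
rewrite [\sum_x G x](bigID (mem [:: a; b; c; f])) /=.
rewrite -!big_uniq // !big_cons !big_nil.
have -> : \sum_(x | x \notin [:: a; b; c; f]) F x = \sum_(x | x \notin [:: a; b; c; f]) G x.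
  by apply: eq_bigr => x /switch_map_id Ex; apply: eq_bigr => z _; rewrite Ex.
have sum_at x p q : e x p -> ~~ e x q -> switch_map x =1 tperm p q ->
    F x + D x * D p = G x + D x * D q.
  move=> exp nexq Ex; rewrite /F /G -(sum_tperm (fun z => D x * D z) exp nexq).
  by congr (_ + _); apply: eq_bigr => z _; rewrite Ex.
have eba : e b a by rewrite sym_e.
have efc : e f c by rewrite sym_e.
have nbc : ~~ e b c by rewrite sym_e.
have nfa : ~~ e f a by rewrite sym_e.
move: (sum_at a b f eab naf Ea) (sum_at b a c eba nbc Eb).
move: (sum_at c f b ecf ncb Ec) (sum_at f c a efc nfa Ef) => /=.
rewrite [D b * _]mulnC [D f * D c]mulnC [D b * D c]mulnC [D f * D a]mulnC; lia.
Qed.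

Lemma switch_in_CT k r : in_CT k e -> switchable ->
  (forall x, connect switch x r) -> in_CT k switch.
Proof.
move=> [[[[sym_e irr_e] [_ card_e]] deg_e] nb] sw conn.
have sym_s := switch_sym sym_e sw; have irr_s := switch_irr irr_e sw.
split; last by rewrite -nb; apply: eq_card => x; rewrite !inE deg_switch.
split; last by move=> x; rewrite deg_switch.
split; first by [].
split=> [x y | ]; first by rewrite (connect_trans (conn x)) // sym_connect_sym.
apply/eqP; rewrite -card_e -(eqn_pmul2l (isT : 0 < 2)) -!handshake //.
by apply/eqP/eq_bigr => x _; rewrite deg_switch.
Qed.

End Switch.

Section RootedTree.
Variables (n : nat) (e : rel 'I_n) (r : 'I_n) (par : 'I_n -> 'I_n) (d : 'I_n -> nat).
Hypotheses (tree_e : is_tree e) (par_r : par r = r).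
Hypothesis par_step : forall x, x != r -> e x (par x) && (d (par x) < d x).

Lemma par_edge x : x != r -> e x (par x).
Proof. by move/par_step/andP=> []. Qed.

Lemma d_par x : x != r -> d (par x) < d x.
Proof. by move/par_step/andP=> []. Qed.

Lemma tree_edge_par x z : e x z -> par x = z \/ par z = x.
Proof.
have [[sym_e irr_e] [_ card_e]] := tree_e; move=> exz.
have [pxz | pxz] := eqVneq (par x) z; first by left.
have [pzx | pzx] := eqVneq (par z) x; first by right.
(* Deleting the edge xz would keep every parent edge, hence connectivity, with
   only n - 2 edges left. *)
pose e0 := [rel u w | e u w && (edge_of u w != edge_of x z)].
have sym0 : symmetric e0 by move=> u w; rewrite /= sym_e edge_ofC.
have conn0 : forall u, connect e0 u r.
  apply: (connect_descent (p := par) (m := d)) => u ur; rewrite /= par_edge //= d_par // andbT.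
  apply/eqP => /edge_of_inj [[eu ep] | [eu ep]];
    [move: pxz | move: pzx]; by rewrite -eu ep eqxx.
have sub0 : edges e0 \proper edges e.
  apply/properP; split; first by apply/subsetP => p; rewrite !inE => /andP[/andP[-> _] ->].
  have xz : x != z by apply: contraTneq exz => ->; rewrite irr_e.
  by exists (edge_of x z); [exact: edge_of_edges | rewrite inE /= edge_of_idem eqxx andbF].
by have := card_edges_connected sym0 conn0; have := proper_card sub0; rewrite card_e; lia.
Qed.

Lemma root_nbr_par u : e r u -> par u = r.
Proof.
have [[_ irr_e] _] := tree_e.
by move=> eru; case: (tree_edge_par eru) => // pru; rewrite -pru par_r irr_e in eru.
Qed.

Lemma fconnect_par_root a : fconnect par r a -> a = r.
Proof. by move/iter_findex <-; elim: (findex _ _ _) => //= k ->. Qed.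

Lemma sibling_subtrees_disjoint u1 u2 x : par u1 = r -> par u2 = r ->
  u1 != r -> u2 != r -> u1 != u2 -> fconnect par x u2 -> ~~ fconnect par x u1.
Proof.
move=> pu1 pu2 u1r u2r u12 xu2; apply/negP => xu1.
have above_child u w : par u = r -> u != w -> fconnect par u w -> w = r.
  by move=> pu uw; rewrite fconnect_eqVf (negbTE uw) pu => /fconnect_par_root.
case/orP: (fconnect_comparable xu1 xu2) => [u1u2 | u2u1].
  by move: u2r; rewrite (above_child u1 u2) ?eqxx.
by move: u1r; rewrite (above_child u2 u1) ?eqxx // eq_sym.
Qed.

Lemma leaf_below a : exists2 x, fconnect par x a & deg e x <= 1.
Proof.
have [[_ irr_e] _] := tree_e.
have [x xa max_x] := @arg_maxnP _ a (fun z => fconnect par z a) d (connect0 _ _).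
exists x => //; rewrite -(cards1 (par x)) /deg; apply/subset_leq_card/subsetP => z.
rewrite !inE => exz; case: (tree_edge_par exz) => [-> // | pzx].
have zr : z != r by apply: contraTneq exz => zr; rewrite -pzx zr par_r irr_e.
have za : fconnect par z a by rewrite fconnect_eqVf pzx xa orbT.
by have := max_x z za; have := d_par zr; rewrite pzx; lia.
Qed.

Lemma degree_drop_below a k : 0 < k -> k < deg e a ->
  exists f, [/\ fconnect par f a, f != a, deg e f <= k & k < deg e (par f)].
Proof.
move=> k_gt0 deg_a; have [l la deg_l] := leaf_below a.
have [|f /andP[fa deg_f] min_f] :=
  @arg_minnP _ l (fun z => fconnect par z a && (deg e z <= k)) d; first by rewrite la /=; lia.
have fa' : f != a by apply: contraTneq deg_f => ->; rewrite -ltnNge.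
have fr : f != r.
  by apply: contraNneq fa' => fr; rewrite fr in fa *; rewrite (fconnect_par_root fa).
exists f; split=> //; rewrite ltnNge; apply/negP => deg_pf.
have pfa : fconnect par (par f) a by rewrite fconnect_eqVf (negbTE fa') in fa.
by have := min_f _ (introT andP (conj pfa deg_pf)); have := d_par fr; lia.
Qed.

Lemma switchable_branches u1 u2 f : e r u1 -> e r u2 -> u1 != u2 ->
  fconnect par f u2 -> f != u2 ->
  switchable e r u1 (par f) f && ~~ fconnect par (par f) u1.
Proof.
have [[sym_e irr_e] _] := tree_e.
move=> eru1 eru2 u12 fu2 f_u2.
have [pu1 pu2] := (root_nbr_par eru1, root_nbr_par eru2).
have [u1r u2r] : u1 != r /\ u2 != r.
  by split; [apply: contraTneq eru1 | apply: contraTneq eru2] => ->; rewrite irr_e.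
have disj := sibling_subtrees_disjoint pu1 pu2 u1r u2r u12.
have below_u2_r x : fconnect par x u2 -> x != r.
  by move=> xu2; apply: contraTneq xu2 => ->; apply/negP => /fconnect_par_root/eqP; apply/negP.
have pfu2 : fconnect par (par f) u2 by rewrite fconnect_eqVf (negbTE f_u2) in fu2.
have [fr pfr] := (below_u2_r _ fu2, below_u2_r _ pfu2).
rewrite disj // andbT /switchable /= !inE eru1 sym_e par_edge //=.
have [pf_u1 f_u1] : par f != u1 /\ f != u1.
  split; [apply: contraTneq pfu2 | apply: contraTneq fu2] => ->;
  by apply/negP => /disj; rewrite connect0.
have pff : par f != f by apply: contraTneq (d_par fr) => ->; rewrite ltnn.
rewrite !negb_or !(eq_sym u1) !(eq_sym r) u1r pfr fr pf_u1 f_u1 pff /=.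
apply/andP; split; apply/negP => /tree_edge_par.
  by rewrite par_r => -[/esym/eqP | /eqP]; rewrite ?(negbTE fr) ?(negbTE pfr).
case=> [pu1' | pu1'].
  by move: (disj _ pfu2); rewrite fconnect_eqVf pu1' connect0 orbT.
by move: pfr; rewrite -pu1' pu1 eqxx.
Qed.

Lemma connect_switch_root b f : d r = 0 -> switchable e r b (par f) f -> par b = r ->
  ~~ fconnect par (par f) b -> forall x, connect (switch e r b (par f) f) x r.
Proof.
set c := par f => d_r sw pb nb.
case/and5P: (sw) => abcf _ _ _ _; have [_ Eb Ec Ef] := switch_mapE abcf.
move: abcf; rewrite /= !inE !negb_or => /and4P[/and3P[rb rc rf] _ _ _].
pose p x := if x == f then r else if x == b then c else par x.
(* After the switch the subtree of b hangs below c, hence the shifted potential. *)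
pose m x := d x + (if fconnect par x b then (d c).+1 else 0).
apply: (connect_descent (p := p) (m := m)) => x xr.
have not_below_r : ~~ fconnect par r b.
  by apply/negP => /fconnect_par_root/eqP; rewrite eq_sym (negbTE rb).
have fr : f != r by rewrite eq_sym.
have d_c : d c < d f := d_par fr.
rewrite /p /m; have [-> | xf] := eqVneq x f.
  rewrite /switch Ef tpermR /= (negbTE not_below_r) par_edge ?d_r //=.
  by rewrite ltn_addr // (leq_ltn_trans _ d_c).
have [-> | xb] := eqVneq x b.
  rewrite /switch Eb tpermR (negbTE nb) connect0 -{1}pb par_edge //=; last by rewrite eq_sym.
  by rewrite addn0 addnS ltnS leq_addl.
have -> : fconnect par (par x) b = fconnect par x b by rewrite [RHS]fconnect_eqVf (negbTE xb).
rewrite ltn_add2r d_par // andbT /switch.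
have [-> | xc] := eqVneq x c; last first.
  by rewrite switch_map_id ?par_edge // !inE !negb_or xr xb xc xf.
have cr : c != r by rewrite eq_sym.
rewrite Ec tpermD ?par_edge //; last by apply: contraNneq nb => ->; rewrite fconnect1.
by apply: contraTneq (d_par cr) => <-; rewrite -leqNgt ltnW.
Qed.

End RootedTree.

Theorem lemma13 (n b : nat) (e : rel 'I_n) :
  1 <= b -> 2 * b + 2 < n ->
  in_CT b e ->
  (forall e' : rel 'I_n, in_CT b e' -> M2 e' <= M2 e) ->
  forall v : 'I_n, deg e v = 3 ->
    #|[set u | e v u && (deg e u == 4)]| <= 1.
Proof.
move=> _ _ CT_e max_e v deg_v; have [[tree_e deg_le4] _] := CT_e.
have [[sym_e irr_e] [conn_e _]] := tree_e.
rewrite leqNgt; apply/negP => /card_gt1P[u1 [u2 []]].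
rewrite !inE => /andP[vu1 /eqP deg_u1] /andP[vu2 /eqP deg_u2] u12.
have [par [d [par_v d_v par_step]]] := rooted_parent_exists (fun x => conn_e x v).
have [|f [fu2 f_u2 deg_f deg_pf]] :=
  degree_drop_below tree_e par_v par_step (a := u2) (isT : 0 < 3); first by rewrite deg_u2.
have deg_y : deg e (par f) = 4 by apply/eqP; rewrite eqn_leq deg_le4.
have /andP[sw nb] := switchable_branches tree_e par_v par_step vu1 vu2 u12 fu2 f_u2.
have pu1 := root_nbr_par tree_e par_v par_step vu1.
have CT' := switch_in_CT CT_e sw (connect_switch_root par_v par_step d_v sw pu1 nb).
have := M2_switch sym_e irr_e sw; have := max_e _ CT'.
rewrite deg_v deg_u1 deg_y; move: deg_f; clear; lia.
Qed.
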